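(* Let $\alpha\in(0,1)$ and $n\ge1$. For every configuration $w\in\mathcal{W}_{2n}$, $$(1+n)^\alpha\le\phi_\alpha(w)\le(2n)^{\alpha+1},$$ and the lower bound is attained if and only if $E(w)=0$.
   Context: A configuration of length $m$ is a word $w=w_1\cdots w_m$ over $\{1,2\}$ with $|w|_1=|w|_2$; $\mathcal{W}_m$ is the set of such words. $E(w)$ is the number of indices $i$ with $w_i=w_{i+1}$ (mismatches). Dyck factors: write $w=p\cdot v\cdot s$ with $v=v_1\cdots v_k$ a nonempty factor (occurring at a given position). $v$ is a positive Dyck factor of height $|p|_1-|p|_2$ if $|v|_1=|v|_2$, $|v_1\cdots v_i|_1\ge|v_1\cdots v_i|_2$ for all $1\le i\le k$, and $|p|_1-|p|_2\ge0$. A negative Dyck factor is defined by exchanging the letters $1$ and $2$ in these three conditions. A Dyck factor is maximal if no Dyck factor with the same height contains it. For $\alpha\in(0,1)$, $\phi_\alpha(w)=\sum_{v\in\mathrm{DF}(w)}(1+|v|_1)^\alpha$, where $\mathrm{DF}(w)$ is the set of (occurrences of) maximal Dyck factors of $w$. *)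

From HB Require Import structures.
From mathcomp Require Import all_boot all_order all_algebra.
From mathcomp Require Import all_classical all_reals all_analysis.
Set Implicit Arguments. Unset Strict Implicit. Unset Printing Implicit Defensive.
Import Order.TTheory GRing.Theory Num.Theory.

Definition is_word (w : seq nat) : bool := all (fun x => (x == 1) || (x == 2)) w.

Definition config (m : nat) (w : seq nat) : bool :=
  [&& size w == m, is_word w & count_mem 1 w == count_mem 2 w].

Definition mismatches (w : seq nat) : nat :=
  \sum_(i < (size w).-1) (nth 0 w i == nth 0 w i.+1).

(* The factor occurrence w_{i+1} ... w_j (positions i < j <= |w|), prefix p = w_1..w_i. *)
Definition factor (w : seq nat) (i j : nat) : seq nat := take (j - i) (drop i w).
Definition prefix (w : seq nat) (i : nat) : seq nat := take i w.

Definition dyck_factor_ab (a b : nat) (w : seq nat) (i j : nat) : bool :=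
  let v := factor w i j in
  let p := prefix w i in
  [&& i < j, j <= size w,
      count_mem a v == count_mem b v,
      all (fun k => count_mem b (take k v) <= count_mem a (take k v)) (iota 1 (j - i))
    & count_mem b p <= count_mem a p].

(* sgn = true: positive Dyck factor; sgn = false: negative Dyck factor. *)
Definition dyck_factor (w : seq nat) (i j : nat) (sgn : bool) : bool :=
  if sgn then dyck_factor_ab 1 2 w i j else dyck_factor_ab 2 1 w i j.

Definition dheight (w : seq nat) (i : nat) (sgn : bool) : int :=
  let p := prefix w i in
  if sgn then (Posz (count_mem 1 p) - Posz (count_mem 2 p))%R
  else (Posz (count_mem 2 p) - Posz (count_mem 1 p))%R.

Definition max_dyck_factor (w : seq nat) (i j : nat) (sgn : bool) : bool :=
  dyck_factor w i j sgn &&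
  ~~ [exists i' : 'I_(size w).+1, exists j' : 'I_(size w).+1, exists s' : bool,
        [&& dyck_factor w i' j' s', dheight w i' s' == dheight w i sgn,
            i' <= i, j <= j' & (i' != i :> nat) || (j' != j :> nat) || (s' != sgn)]].

Local Open Scope ring_scope.

Definition phi (R : realType) (alpha : R) (w : seq nat) : R :=
  \sum_(i < (size w).+1) \sum_(j < (size w).+1) \sum_(s : bool | max_dyck_factor w i j s)
     ((1 + (count_mem 1 (factor w i j))%:R) `^ alpha).

From Pilot Require Import Defs.
From HB Require Import structures.
From mathcomp Require Import all_boot all_order all_algebra.
From mathcomp Require Import all_classical all_reals all_analysis.
From mathcomp Require Import zify lra.
Import Order.TTheory GRing.Theory Num.Theory.

(* Read [w] as a lattice path: a Dyck factor is a stretch of the path that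
   stays weakly above its starting height (for the chosen sign) and returns to
   it.  When [w] is balanced every letter lies in a maximal Dyck factor, so the
   numbers [c_v = |v|_1] of the maximal factors sum to at least [|w|_1 = n].
   Since [(1 + c)^a >= (1 + c) (1 + N)^(a-1)] for [c <= N], the sum of
   [(1 + c_v)^a] over [k >= 1] factors is at least [(k + N) (1 + N)^(a-1)],
   hence at least [(1 + N)^a], strictly so when [k >= 2].  Distinct maximal
   factors start at distinct positions [< 2n] and contain at most [n] ones,
   which gives the upper bound.  A mismatch [w_k = w_(k+1)] puts positions [k]
   and [k + 1] into different maximal factors, whereas in an alternating word
   the whole word is the only maximal factor. *)

Set Implicit Arguments. Unset Strict Implicit.

Lemma dheight0 w s : dheight w 0 s = 0%R.
Proof. by case: s; rewrite /dheight /Defs.prefix take0 /= subrr. Qed.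

Lemma dheight_negb w t s : dheight w t (~~ s) = (- dheight w t s)%R.
Proof. by case: s; rewrite /dheight /= opprB. Qed.

Lemma dheightS w s t : is_word w -> (t < size w)%N ->
  dheight w t.+1 s = (dheight w t s + (if (nth 0 w t == 1) == s then 1 else -1))%R.
Proof.
move=> /allP w12 ht; rewrite /dheight /Defs.prefix (take_nth 0 ht) -!cats1 !count_cat /=.
by move: (w12 _ (mem_nth 0 ht)) => /orP[] /eqP ->; case: s => /=; lia.
Qed.

Lemma dheightS_bounds w s t : is_word w -> (t < size w)%N ->
  (dheight w t s - 1 <= dheight w t.+1 s <= dheight w t s + 1)%R.
Proof. by move=> hw ht; rewrite (dheightS s hw ht); case: ifP => _; lia. Qed.

Definition height_ab (a b : nat) (w : seq nat) (t : nat) : int :=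
  ((count_mem a (take t w))%:Z - (count_mem b (take t w))%:Z)%R.

Lemma count_take_factor (w : seq nat) x i j k : (k <= j - i)%N ->
  count_mem x (take (i + k) w) =
  (count_mem x (take i w) + count_mem x (take k (Defs.factor w i j)))%N.
Proof. by move=> hk; rewrite takeD count_cat /Defs.factor take_takel. Qed.

Lemma dyck_factor_ab_heights (w : seq nat) a b i j : dyck_factor_ab a b w i j <->
  [/\ (i < j)%N, (j <= size w)%N, height_ab a b w j = height_ab a b w i,
      (0 <= height_ab a b w i)%R
    & forall t, (i <= t <= j)%N -> (height_ab a b w i <= height_ab a b w t)%R].
Proof.
rewrite /dyck_factor_ab /height_ab /Defs.prefix.
have count_end x : (i <= j)%N -> count_mem x (take j w) =
    (count_mem x (take i w) + count_mem x (Defs.factor w i j))%N.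
  move=> hij; rewrite -(subnKC hij) (@count_take_factor w x i j (j - i)) //.
  by rewrite /Defs.factor take_takel // addKn.
split.
- case/and5P => hij hjs /eqP heq /allP hpref hp.
  split => //; first by rewrite !count_end //; lia.
  + lia.
  + move=> t hit; have -> : t = (i + (t - i))%N by lia.
    have hk : (t - i <= j - i)%N by lia.
    rewrite !(@count_take_factor w _ i j _ hk).
    have [->|ht] := posnP (t - i); first by rewrite take0 /=; lia.
    by have := hpref (t - i)%N; rewrite mem_iota => /(_ ltac:(lia)); lia.
- case=> hij hjs heq hp hmin; apply/and5P; split => //.
  + by apply/eqP; move: heq; rewrite !count_end //; lia.
  + apply/allP => k; rewrite mem_iota => hk.
    have hk' : (k <= j - i)%N by lia.
    by have := hmin (i + k)%N ltac:(lia); rewrite !(@count_take_factor w _ i j _ hk'); lia.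
  + lia.
Qed.

Lemma dyck_factor_heights w i j s : dyck_factor w i j s <->
  [/\ (i < j)%N, (j <= size w)%N, dheight w j s = dheight w i s, (0 <= dheight w i s)%R
    & forall t, (i <= t <= j)%N -> (dheight w i s <= dheight w t s)%R].
Proof. by case: s; apply: dyck_factor_ab_heights. Qed.

Lemma max_dyck_factor_eq w i j s i' j' s' :
  max_dyck_factor w i j s -> dyck_factor w i' j' s' -> (i' <= i)%N -> (j <= j')%N ->
  dheight w i' s' = dheight w i s -> [/\ i' = i, j' = j & s' = s].
Proof.
move=> /andP[_ /existsPn hmax] h' hi hj hd.
have [hij' hj' _ _ _] := (dyck_factor_heights _ _ _ _).1 h'.
have [hi'S hj'S] : (i' < (size w).+1)%N /\ (j' < (size w).+1)%N by lia.
move: (hmax (inord i')) => /existsPn /(_ (inord j')) /existsPn /(_ s').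
rewrite !inordK // h' hd eqxx hi hj /=.
by case: eqP => // ->; case: eqP => // ->; case: eqP => // ->.
Qed.

Section DyckFactors.
Variable w : seq nat.
Hypothesis hw : is_word w.

Lemma dyck_factor_first_letter i j s : dyck_factor w i j s -> (nth 0 w i == 1) == s.
Proof.
case/dyck_factor_heights => hij hjs _ _ hmin; have hi : (i < size w)%N by lia.
by have := hmin i.+1 ltac:(lia); rewrite (dheightS s hw hi); case: ifP => //; lia.
Qed.

Lemma dyck_factor_first_step i j s : dyck_factor w i j s ->
  dheight w i.+1 s = (dheight w i s + 1)%R.
Proof.
move=> h; have up := dyck_factor_first_letter h.
case/dyck_factor_heights: h => hij hjs _ _ _; have hi : (i < size w)%N by lia.
by rewrite (dheightS s hw hi) up.
Qed.

Lemma dyck_factor_nested_sign i j s i' j' s' :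
  dyck_factor w i j s -> dyck_factor w i' j' s' -> (i' <= i)%N -> (j <= j')%N -> s' = s.
Proof.
move=> h h' hi hj; have up := dyck_factor_first_step h.
case/dyck_factor_heights: h => hij _ _ hp _; case/dyck_factor_heights: h' => _ _ _ hp' hmin'.
have [//|ss'] := eqVneq s' s.
have {}ss' : s' = ~~ s by move: ss'; case: (s); case: (s').
move: hp' (hmin' i.+1 ltac:(lia)); rewrite ss' !dheight_negb up; lia.
Qed.

Lemma max_dyck_factorN i j s : dyck_factor w i j s -> ~~ max_dyck_factor w i j s ->
  exists i' j', [/\ dyck_factor w i' j' s, dheight w i' s = dheight w i s,
    (i' <= i)%N, (j <= j')%N & (i' + (size w - j') < i + (size w - j))%N].
Proof.
rewrite /max_dyck_factor => h; rewrite h /= => /negbNE /existsP[i' /existsP[j' /existsP[s']]].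
case/and5P=> h' /eqP hd hi hj hne; have ss' := dyck_factor_nested_sign h h' hi hj; subst s'.
have [_ hj' _ _ _] := (dyck_factor_heights _ _ _ _).1 h'.
exists i', j'; split => //; move: hne; rewrite eqxx orbF; case/orP => /eqP; lia.
Qed.

Lemma dyck_factor_sub_max i j s : dyck_factor w i j s -> exists i' j',
  [/\ (i' <= i)%N, (j <= j')%N, dheight w i' s = dheight w i s & max_dyck_factor w i' j' s].
Proof.
move: {2}(i + (size w - j))%N (leqnn (i + (size w - j))%N) => m.
elim: m i j => [|m IH] i j hm h; case hmax: (max_dyck_factor w i j s);
  try by exists i, j.
all: have [i' [j' [h' hd hi hj hlt]]] := max_dyck_factorN h (negbT hmax).
- lia.
- have [i'' [j'' [hi' hj' hd' hmax']]] := IH i' j' ltac:(lia) h'.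
  by exists i'', j''; split; rewrite ?hd' //; lia.
Qed.

Lemma max_dyck_factor_same_start i j s j' s' :
  max_dyck_factor w i j s -> max_dyck_factor w i j' s' -> j = j' /\ s = s'.
Proof.
move=> hm hm'; have /andP[h _] := hm; have /andP[h' _] := hm'.
have ss' : s = s'.
  move: (dyck_factor_first_letter h) (dyck_factor_first_letter h').
  by case: (s) (s') => [] [] /eqP ->.
subst s'; split => //; have [hjj'|hj'j] := leqP j j'.
- by have [_ -> _] := max_dyck_factor_eq hm h' (leqnn i) hjj' erefl.
- by have [_ -> _] := max_dyck_factor_eq hm' h (leqnn i) (ltnW hj'j) erefl.
Qed.

(* The sign and starting height of a Dyck factor covering position [k]: the
   step [k -> k + 1] starts one at [k] or, if the height at [k] is negative for
   the sign of that step, ends one of the opposite sign at [k + 1]. *)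
Definition cover_label (k : nat) : bool * int :=
  let s := nth 0 w k == 1 in
  if (0 <= dheight w k s)%R then (s, dheight w k s) else (~~ s, dheight w k.+1 (~~ s)).

Lemma cover_label_mismatch k : (k.+1 < size w)%N -> nth 0 w k = nth 0 w k.+1 ->
  cover_label k <> cover_label k.+1.
Proof.
move=> hk same; rewrite /cover_label -same; set s := nth 0 w k == 1.
have up := dheightS s hw (ltnW hk); have up' := dheightS s hw hk.
rewrite eqxx in up; rewrite -same eqxx in up'; rewrite !dheight_negb up up'.
by clearbody s; case: s up up' => /= up up'; case: ifP => h1; case: ifP => h2 [] //; lia.
Qed.

Hypothesis hbal : count_mem 1 w = count_mem 2 w.

Lemma dheight_size s : dheight w (size w) s = 0%R.
Proof. by case: s; rewrite /dheight /Defs.prefix take_size hbal subrr. Qed.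

(* The factor ends at the first return to the height [h] at [k]; the path
   does return because it ends at height [0 <= h]. *)
Lemma dyck_factor_of_up_step s k : (k < size w)%N -> (0 <= dheight w k s)%R ->
  dheight w k.+1 s = (dheight w k s + 1)%R -> exists j, dyck_factor w k j s.
Proof.
move=> hk hh up; set h := dheight w k s in hh up *.
have ex_ret : exists t, (k < t)%N && (dheight w t s <= h)%R.
  by exists (size w); rewrite hk dheight_size.
case: (ex_minnP ex_ret) => j /andP[hkj hjh] hmin.
have hjs : (j <= size w)%N by apply: hmin; rewrite hk dheight_size.
have hj2 : (k.+1 < j)%N.
  by case: (ltngtP k.+1 j) => // hj; [lia | move: hjh; rewrite -hj up; lia].
have hprev : (h < dheight w j.-1 s)%R.
  by rewrite ltNge; apply/negP => hle; have := hmin j.-1; rewrite hle andbT; lia.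
have := dheightS_bounds s hw (ltac:(lia) : (j.-1 < size w)%N).
rewrite (ltn_predK hj2) => hb.
exists j; apply/dyck_factor_heights; split => //; rewrite -/h; first lia.
move=> t /andP[h1 h2].
have [->|htk] := eqVneq t k; first by [].
have [->|htj] := eqVneq t j; first lia.
by rewrite leNgt; apply/negP => hlt; have := hmin t; rewrite (ltW hlt) andbT; lia.
Qed.

(* Symmetrically, the factor starts at the last visit before [k] to the
   height [h] at [k + 1], which exists since the path starts at height [0]. *)
Lemma dyck_factor_of_down_step s k : (k < size w)%N -> (0 <= dheight w k.+1 s)%R ->
  dheight w k s = (dheight w k.+1 s + 1)%R -> exists2 i, (i <= k)%N & dyck_factor w i k.+1 s.
Proof.
move=> hk hh down; set h := dheight w k.+1 s in hh down *.
have ex_visit : exists t, (t <= k)%N && (dheight w t s <= h)%R.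
  by exists 0%N; rewrite dheight0.
have ub t : (t <= k)%N && (dheight w t s <= h)%R -> (t <= k)%N by case/andP.
case: (ex_maxnP ex_visit ub) => i /andP[hik hih] hmax.
have hi2 : (i < k)%N.
  by case: (ltngtP i k) => // hi; [lia | move: hih; rewrite hi down; lia].
have hnext : (h < dheight w i.+1 s)%R.
  by rewrite ltNge; apply/negP => hle; have := hmax i.+1; rewrite hle andbT; lia.
have hb := dheightS_bounds s hw (ltac:(lia) : (i < size w)%N).
exists i; first lia.
apply/dyck_factor_heights; split; rewrite -/h; try lia.
move=> t /andP[h1 h2].
have [->|hti] := eqVneq t i; first by [].
have [->|htk] := eqVneq t k.+1; first lia.
rewrite leNgt; apply/negP => hlt.
by have := hmax t; rewrite (ltW (lt_le_trans hlt _)) ?andbT; lia.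
Qed.

Lemma dyck_factor_cover k : (k < size w)%N -> exists i j s,
  [/\ dyck_factor w i j s, (i <= k < j)%N & (s, dheight w i s) = cover_label k].
Proof.
move=> hk; rewrite /cover_label; set s := nth 0 w k == 1.
have up := dheightS s hw hk; rewrite eqxx in up.
case: ifP => hp.
- have [j hj] := dyck_factor_of_up_step hk hp up.
  by exists k, j, s; case/dyck_factor_heights: (hj) => *; split => //; lia.
- have hp' : (0 <= dheight w k.+1 (~~ s))%R by rewrite dheight_negb up; move: hp; lia.
  have down : dheight w k (~~ s) = (dheight w k.+1 (~~ s) + 1)%R.
    by rewrite !dheight_negb up; lia.
  have [i hik hi] := dyck_factor_of_down_step hk hp' down.
  by exists i, k.+1, (~~ s); case/dyck_factor_heights: (hi) => _ _ -> _ _; split => //; lia.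
Qed.

Lemma max_dyck_factor_cover k : (k < size w)%N -> exists i j s,
  [/\ max_dyck_factor w i j s, (i <= k < j)%N & (s, dheight w i s) = cover_label k].
Proof.
move=> /dyck_factor_cover[i [j [s [h hk <-]]]].
have [i' [j' [hi hj hd hmax]]] := dyck_factor_sub_max h.
by exists i', j', s; rewrite hd; split => //; lia.
Qed.

End DyckFactors.

Lemma count_factor_le (w : seq nat) p i j : (count p (Defs.factor w i j) <= count p w)%N.
Proof.
rewrite /Defs.factor; apply: (@leq_trans (count p (drop i w))).
  by rewrite -{2}(cat_take_drop (j - i) (drop i w)) count_cat leq_addr.
by rewrite -{2}(cat_take_drop i w) count_cat leq_addl.
Qed.

Lemma count_factor_sum (w : seq nat) (p : pred nat) i j : (j <= size w)%N ->
  count p (Defs.factor w i j) = (\sum_(k < size w) [&& p (nth 0 w k), i <= k & k < j])%N.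
Proof.
move=> hj; have [hij|hji] := leqP i j; last first.
  rewrite /Defs.factor (_ : j - i = 0)%N; last by lia.
  by rewrite take0 big1 // => k _; case: (p _) => //=; lia.
rewrite /Defs.factor -(map_nth_iota 0); last by lia.
rewrite count_map -sum1_count (_ : iota i (j - i) = index_iota i j) //.
rewrite (big_nat_widenl i 0) // (big_nat_widen _ _ _ _ _ hj) big_mkord big_mkcond /=.
by apply: eq_bigr => k _; case: (p _).
Qed.

Lemma word_count (w : seq nat) : is_word w -> (count_mem 1 w + count_mem 2 w = size w)%N.
Proof. by elim: w => //= x s IH /andP[/orP[] /eqP -> /IH]; lia. Qed.

Lemma mismatches_eq0 (w : seq nat) : mismatches w = 0%N ->
  forall k, (k.+1 < size w)%N -> nth 0 w k != nth 0 w k.+1.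
Proof.
move=> h k hk; apply/negP => /eqP same; have hk' : (k < (size w).-1)%N by lia.
by move: h; rewrite /mismatches (bigD1 (Ordinal hk')) //= same eqxx; lia.
Qed.

Lemma mismatches_neq0 (w : seq nat) : mismatches w <> 0%N ->
  exists2 k, (k.+1 < size w)%N & nth 0 w k = nth 0 w k.+1.
Proof.
move=> h; case: (boolP [exists k : 'I_(size w).-1, nth 0 w k == nth 0 w k.+1]).
  by case/existsP => k /eqP same; exists k => //; have := ltn_ord k; lia.
move=> /existsPn none; exfalso; apply: h; rewrite /mismatches big1 // => k _.
by rewrite (negbTE (none k)).
Qed.

Section Alternating.
Variable w : seq nat.
Hypotheses (hw : is_word w) (hbal : count_mem 1 w = count_mem 2 w).
Hypothesis halt : mismatches w = 0%N.
Let s0 := nth 0 w 0 == 1.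

Lemma alternating_letter t : (t < size w)%N ->
  (nth 0 w t == 1) = (if odd t then ~~ s0 else s0).
Proof.
have letter u : (u < size w)%N -> (nth 0 w u == 1) || (nth 0 w u == 2).
  by move=> hu; move/allP: hw; apply; rewrite mem_nth.
elim: t => [//|t IH] ht; have := mismatches_eq0 halt ht; move: (IH (ltnW ht)) => /=.
by case/orP: (letter _ ht) => /eqP ->; case/orP: (letter _ (ltnW ht)) => /eqP ->;
  case: (odd t); case: s0.
Qed.

Lemma alternating_dheight t : (t <= size w)%N -> dheight w t s0 = Posz (odd t).
Proof.
elim: t => [|t IH] ht; first by rewrite dheight0.
rewrite (dheightS s0 hw ht) IH ?alternating_letter //=; last by lia.
by case: (odd t); case: s0.
Qed.

Lemma alternating_dyck_factor i j s : dyck_factor w i j s -> s = s0 /\ dheight w i s = 0%R.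
Proof.
move=> h; have up := dyck_factor_first_step hw h.
case/dyck_factor_heights: h => hij hjs _ hp _; move: up hp.
have [->|ss0] := eqVneq s s0; first by rewrite !alternating_dheight; try lia; case: (odd i).
have -> : s = ~~ s0 by move: ss0; case: (s); case: (s0).
by rewrite !dheight_negb !alternating_dheight; try lia; case: (odd i).
Qed.

Lemma alternating_max_dyck_factor i j s :
  max_dyck_factor w i j s -> [/\ i = 0%N, j = size w & s = s0].
Proof.
move=> hm; have /andP[h _] := hm; have [ss0 hd] := alternating_dyck_factor h.
subst s; have {}hd : dheight w 0 s0 = dheight w i s0 by rewrite dheight0 hd.
have [hij hjs _ _ _] := (dyck_factor_heights _ _ _ _).1 h.
have whole : dyck_factor w 0 (size w) s0.
  apply/dyck_factor_heights; split; rewrite ?dheight0 ?dheight_size //; try lia.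
  by move=> t /andP[_ ht]; rewrite alternating_dheight.
by have [<- <- _] := max_dyck_factor_eq hm whole (leq0n i) hjs hd.
Qed.
End Alternating.

Local Notation occurrence w := ('I_(size w).+1 * ('I_(size w).+1 * bool))%type.

Definition max_dyck_set (w : seq nat) : {set occurrence w} :=
  [set x : occurrence w | max_dyck_factor w x.1 x.2.1 x.2.2].

Definition factor_ones (w : seq nat) (x : occurrence w) : nat :=
  count_mem 1 (Defs.factor w x.1 x.2.1).

Lemma phiE (R : realType) (alpha : R) (w : seq nat) :
  phi alpha w = (\sum_(x in max_dyck_set w) (1 + (factor_ones x)%:R) `^ alpha)%R.
Proof.
rewrite /phi; under eq_bigr => i _ do rewrite pair_big_dep /=.
by rewrite pair_big_dep /=; apply: eq_bigl => x; rewrite inE.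
Qed.

Lemma max_dyck_setP (w : seq nat) i j s : max_dyck_factor w i j s ->
  exists2 x, x \in max_dyck_set w & [/\ val x.1 = i, val x.2.1 = j & x.2.2 = s].
Proof.
move=> hm; have /andP[/dyck_factor_heights[hij hjs _ _ _] _] := hm.
by exists (inord i, (inord j, s)); rewrite ?inE /= !inordK //; lia.
Qed.

Section MaxDyckSet.
Variable w : seq nat.
Hypotheses (hw : is_word w) (hbal : count_mem 1 w = count_mem 2 w).

Lemma card_max_dyck_set_le : (#|max_dyck_set w| <= size w)%N.
Proof.
have start_inj : {in max_dyck_set w &, injective (fun x => x.1)}.
  move=> [i [j s]] [i' [j' s']]; rewrite !inE /= => hm hm' ii'; subst i'.
  by have [/val_inj -> ->] := max_dyck_factor_same_start hw hm hm'.
have starts : [set x.1 | x in max_dyck_set w] \subset [set~ ord_max].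
  apply/fintype.subsetP => _ /imsetP[x + ->]; rewrite !inE.
  case/andP => /dyck_factor_heights[hij hjs _ _ _] _.
  by apply/eqP => /(congr1 val) /= e; lia.
rewrite -(card_in_imset start_inj) (leq_trans (subset_leq_card starts)) //.
by rewrite cardsC1 card_ord.
Qed.

Lemma count_le_sum_factor_ones :
  (count_mem 1 w <= \sum_(x in max_dyck_set w) factor_ones x)%N.
Proof.
have ones_in (x : occurrence w) : factor_ones x =
    (\sum_(k < size w) [&& nth 0 w k == 1, x.1 <= k & k < x.2.1])%N.
  have hj : (x.2.1 <= size w)%N by rewrite -ltnS ltn_ord.
  by rewrite /factor_ones count_factor_sum.
have ones_w : count_mem 1 w = (\sum_(k < size w) [&& nth 0 w k == 1, 0 <= k & k < size w])%N.
  have := @count_factor_sum w (pred1 1) 0 (size w) (leqnn _).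
  by rewrite /Defs.factor drop0 subn0 take_size.
rewrite ones_w (eq_bigr _ (fun x _ => ones_in x)) exchange_big /=.
apply: leq_sum => k _; case one: (nth 0 w k == 1) => //=.
have [i [j [s [hm hk _]]]] := max_dyck_factor_cover hw hbal (ltn_ord k).
have [x xA [xi xj _]] := max_dyck_setP hm.
by rewrite (bigD1 x) //= xi xj hk ltn_ord.
Qed.

Lemma card_max_dyck_set_gt0 : (0 < size w)%N -> (0 < #|max_dyck_set w|)%N.
Proof.
move=> /(max_dyck_factor_cover hw hbal)[i [j [s [hm _ _]]]].
by have [x xA _] := max_dyck_setP hm; apply/card_gt0P; exists x.
Qed.

(* The two maximal factors covering the positions of a mismatch have different
   cover labels, hence different starts or signs. *)
Lemma card_max_dyck_set_gt1 : mismatches w <> 0%N -> (1 < #|max_dyck_set w|)%N.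
Proof.
move=> /mismatches_neq0[k hk same].
have [i [j [s [hm _ lab]]]] := max_dyck_factor_cover hw hbal (ltnW hk).
have [i' [j' [s' [hm' _ lab']]]] := max_dyck_factor_cover hw hbal hk.
have [x xA [xi _ xs]] := max_dyck_setP hm; have [y yA [yi _ ys]] := max_dyck_setP hm'.
apply/card_gt1P; exists x, y; split => //; apply/eqP => exy.
apply: (cover_label_mismatch hw hk same).
by rewrite -lab -lab' -xi -xs -yi -ys exy.
Qed.

Lemma card_max_dyck_set_le1 : mismatches w = 0%N -> (#|max_dyck_set w| <= 1)%N.
Proof.
move=> halt; pose x0 : occurrence w := (ord0, (ord_max, nth 0 w 0 == 1)).
rewrite -(cards1 x0) subset_leq_card //; apply/fintype.subsetP => -[i [j s]].
rewrite !inE /= => /(alternating_max_dyck_factor hw hbal halt) [hi hj ->].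
by apply/eqP; congr (_, (_, _)); apply: val_inj.
Qed.
End MaxDyckSet.

Local Open Scope ring_scope.

Section PowerSums.
Variables (R : realType) (a : R).
Hypothesis ha : 0 < a < 1.

Lemma mulr_powRB1_le (x M : R) : 0 < x <= M -> x * M `^ (a - 1) <= x `^ a.
Proof.
case/andP: ha => a0 a1 /andP[x0 xM].
rewrite -(mulr_powRB1 (ltW x0) a0) ler_wpM2l ?(ltW x0) // -opprB !powRN.
rewrite lef_pV2 ?posrE ?powR_gt0 //; last by lra.
by apply: ge0_ler_powR; rewrite ?nnegrE; lra.
Qed.

Variables (T : finType) (A : {set T}) (c : T -> nat).
Let N := (\sum_(x in A) c x)%N.

Lemma sum_powR_ge :
  (1 + N%:R) `^ (a - 1) * (#|A|%:R + N%:R) <= \sum_(x in A) (1 + (c x)%:R) `^ a.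
Proof.
have -> : #|A|%:R + N%:R = \sum_(x in A) (1 + (c x)%:R) :> R.
  by rewrite big_split /= sumr_const /N natr_sum.
rewrite mulr_sumr; apply: ler_sum => x xA; rewrite mulrC; apply: mulr_powRB1_le.
by rewrite ltr_pwDl ?ler0n // lerD2l ler_nat /N (bigD1 x) //= leq_addr.
Qed.

Lemma powR_le_powR_sum m : (m <= N)%N ->
  (1 + m%:R) `^ a <= (1 + N%:R) `^ (a - 1) * (1 + N%:R).
Proof.
have [a0 _] := andP ha; move=> hm; rewrite mulrC mulr_powRB1 ?addr_ge0 ?ler0n //.
by apply: ge0_ler_powR; rewrite ?nnegrE ?addr_ge0 ?ler0n ?lerD2l ?ler_nat ?ltW.
Qed.

Lemma powR_le_sum_powR m : (m <= N)%N -> (0 < #|A|)%N ->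
  (1 + m%:R) `^ a <= \sum_(x in A) (1 + (c x)%:R) `^ a.
Proof.
move=> hm hA; apply: le_trans (powR_le_powR_sum hm) (le_trans _ sum_powR_ge).
by rewrite ler_wpM2l ?powR_ge0 // lerD2r ler1n.
Qed.

Lemma powR_lt_sum_powR m : (m <= N)%N -> (1 < #|A|)%N ->
  (1 + m%:R) `^ a < \sum_(x in A) (1 + (c x)%:R) `^ a.
Proof.
move=> hm hA; apply: le_lt_trans (powR_le_powR_sum hm) (lt_le_trans _ sum_powR_ge).
have N1 : 0 < 1 + N%:R :> R by rewrite ltr_pwDl ?ler0n.
by rewrite ltr_pM2l ?powR_gt0 // ltrD2r ltr1n.
Qed.

Lemma sum_powR_le_card K : (forall x, x \in A -> (c x <= K)%N) ->
  \sum_(x in A) (1 + (c x)%:R) `^ a <= #|A|%:R * (1 + K%:R) `^ a.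
Proof.
have [a0 _] := andP ha; move=> hc; rewrite mulr_natl -sumr_const; apply: ler_sum => x xA.
by apply: ge0_ler_powR; rewrite ?nnegrE ?addr_ge0 ?ler0n ?lerD2l ?ler_nat ?hc ?ltW.
Qed.
End PowerSums.

Unset Implicit Arguments.

Theorem lemma2 (R : realType) (alpha : R) (n : nat) (w : seq nat) :
  0 < alpha < 1 -> (1 <= n)%N -> config (2 * n) w ->
  [/\ (1 + n%:R) `^ alpha <= phi alpha w,
      phi alpha w <= (2 * n)%:R `^ (alpha + 1)
    & phi alpha w = (1 + n%:R) `^ alpha <-> mismatches w = 0%N].
Proof.
move=> ha hn /and3P[/eqP hsize hw /eqP hbal].
have ones : count_mem 1 w = n by have := word_count hw; rewrite hsize hbal; lia.
have ones_le (x : occurrence w) : (factor_ones x <= n)%N.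
  by rewrite -ones /factor_ones count_factor_le.
have ones_ge : (n <= \sum_(x in max_dyck_set w) factor_ones x)%N.
  by rewrite -ones count_le_sum_factor_ones.
have nonempty : (0 < #|max_dyck_set w|)%N by apply: card_max_dyck_set_gt0; lia.
have lower := powR_le_sum_powR ha ones_ge nonempty.
have upper := sum_powR_le_card ha (A := max_dyck_set w) (fun x _ => ones_le x).
rewrite phiE; split => //.
- apply: le_trans upper _; have pos2n : 0 < (2 * n)%:R :> R by rewrite ltr0n; lia.
  rewrite powRD ?(gt_eqF pos2n) ?implybT // powRr1 ?ler0n // [leRHS]mulrC.
  apply: ler_pM; rewrite ?ler0n ?powR_ge0 //.
    by rewrite ler_nat -hsize card_max_dyck_set_le.
  apply: ge0_ler_powR; rewrite ?nnegrE ?addr_ge0 ?ler0n //; first by case/andP: ha => /ltW.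
  by rewrite -(natrD _ 1) ler_nat; lia.
- split => [eq_lower | /(card_max_dyck_set_le1 hw hbal) single].
  + have [//|/eqP /(card_max_dyck_set_gt1 hw hbal) many] := eqVneq (mismatches w) 0%N.
    by have := powR_lt_sum_powR ha ones_ge many; rewrite eq_lower ltxx.
  + apply/le_anti; rewrite lower andbT (le_trans upper) //.
    by rewrite -[leRHS]mul1r ler_wpM2r ?powR_ge0 // lern1.
Qed.
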